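(* Let $\epsilon_1,\epsilon_2,\dots$ be independent Rademacher random variables and $S_m=\epsilon_1+\dots+\epsilon_m$. Let $k\ge2$ be an integer and for $i=0,1,\dots,k-1$ let $$\delta_i:=\mathbb{P}\{S_{k^2+2i-1}=k+1\}-\mathbb{P}\{S_{k^2+2i}=k\}=\frac{\binom{k^2-1+2i}{k(k-1)/2+i-1}}{2^{k^2-1+2i}}-\frac{\binom{k^2+2i}{k(k-1)/2+i}}{2^{k^2+2i}}.$$ Then $$\delta_0\le\delta_1\le\dots\le\delta_{k-1}<0.$$
   Context: A Rademacher random variable takes the values $1$ and $-1$ each with probability $1/2$. *)

From HB Require Import structures.
From mathcomp Require Import all_boot all_order all_algebra.
Set Implicit Arguments. Unset Strict Implicit. Unset Printing Implicit Defensive.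
Import Order.TTheory GRing.Theory Num.Theory.
Local Open Scope ring_scope.

(* A sign vector e : {ffun 'I_m -> bool} encodes (eps_1,...,eps_m) with
   eps_i = +1 if e i = true and -1 otherwise. Independent Rademacher
   variables eps_1..eps_m have exactly the uniform law on such vectors. *)
Definition rad (b : bool) : int := if b then 1 else -1.

Definition S_sum (m : nat) (e : {ffun 'I_m -> bool}) : int :=
  \sum_(i < m) rad (e i).

Definition probS (R : realFieldType) (m : nat) (j : int) : R :=
  (#|[set e : {ffun 'I_m -> bool} | S_sum e == j]|)%:R / (2%:R ^+ m).

Definition delta (R : realFieldType) (k i : nat) : R :=
  probS R (k ^ 2 + 2 * i - 1)%N (k.+1)%:Z - probS R (k ^ 2 + 2 * i)%N k%:Z.

From Pilot Require Import Defs.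
From HB Require Import structures.
From mathcomp Require Import all_boot all_order all_algebra zify ring.
Import Order.TTheory GRing.Theory Num.Theory.
Local Open Scope ring_scope.

(* Counting minus signs, P{S_m = m - 2t} = C(m,t)/2^m.  With m = k^2 + 2i and
   n = k(k-1)/2 + i we have m = 2n + k, and m C(m-1,n-1) = n C(m,n) turns
   delta_i into -k C(m,n)/(m 2^m).  Going from i to i+1 multiplies
   C(m,n)/(m 2^m) by m(m+1)/(4(n+k+1)(n+1)), which is at most 1 exactly when
   k^2 <= 6n + 3k + 4; this holds because 2n >= k^2 - k. *)
Lemma S_sumE m (e : {ffun 'I_m -> bool}) :
  S_sum e = m%:Z - (2 * #|[set i | ~~ e i]|)%:Z.
Proof.
have radE (b : bool) : Defs.rad b = 1 - 2 * (~~ b)%:R by case: b.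
rewrite /S_sum (eq_bigr _ (fun i _ => radE (e i))) big_split /= sumr_const card_ord.
rewrite sumrN -mulr_sumr -natr_sum.
have -> : (\sum_(i < m) ~~ e i)%N = #|[set i | ~~ e i]|.
  by rewrite -sum1_card [RHS]big_mkcond; apply: eq_bigr => i _; rewrite inE; case: (e i).
by rewrite -!natz natrM.
Qed.

Lemma card_S_sum_eq m t :
  #|[set e : {ffun 'I_m -> bool} | S_sum e == m%:Z - (2 * t)%:Z]| = 'C(m, t).
Proof.
pose minus_set (e : {ffun 'I_m -> bool}) := [set i | ~~ e i].
have minus_set_inj : injective minus_set.
  move=> e1 e2 /setP eq12; apply/ffunP => i.
  by move: (eq12 i); rewrite !inE; case: (e1 i); case: (e2 i).
rewrite -[in RHS](card_ord m) -card_draws -(card_imset _ minus_set_inj).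
apply: eq_card => B; rewrite !inE; apply/imsetP/idP.
  by case=> e; rewrite inE S_sumE /minus_set => /eqP eq_t ->; apply/eqP; lia.
have minus_set_notin : minus_set [ffun i => i \notin B] = B.
  by apply/setP => i; rewrite !inE ffunE negbK.
move=> /eqP card_B; exists [ffun i => i \notin B] => //.
by rewrite inE S_sumE -/(minus_set _) minus_set_notin card_B.
Qed.

Lemma probS_bin (R : realFieldType) m t (j : int) :
  j = m%:Z - (2 * t)%:Z -> probS R m j = 'C(m, t)%:R / 2%:R ^+ m.
Proof. by move=> ->; rewrite /probS card_S_sum_eq. Qed.

Lemma bin_weight_pred_sub (R : realFieldType) (m n k : nat) :
  (0 < n)%N -> m = (2 * n + k)%N ->
  'C(m - 1, n - 1)%:R / 2%:R ^+ (m - 1) - 'C(m, n)%:R / 2%:R ^+ m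
    = - (k * 'C(m, n))%:R / (m%:R * 2%:R ^+ m) :> R.
Proof.
move=> n_gt0 mE; have m_gt0 : (0 < m)%N by lia.
have m_neq0 : (m%:R : R) != 0 by rewrite pnatr_eq0 -lt0n.
have absorb : ('C(m - 1, n - 1)%:R : R) = n%:R * 'C(m, n)%:R / m%:R.
  rewrite -natrM -[in (n * _)%N](prednK n_gt0) -mul_bin_diag !subn1 natrM.
  by rewrite [m%:R * _]mulrC mulfK.
have pow_pred : (2%:R ^+ m : R) = 2 * 2%:R ^+ (m - 1).
  by rewrite -exprS; congr (_ ^+ _); lia.
have mR : (m%:R : R) = 2 * n%:R + k%:R by rewrite mE natrD natrM.
rewrite absorb pow_pred natrM; rewrite mR in m_neq0 *.
by field; rewrite m_neq0 expf_eq0 pnatr_eq0 andbF.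
Qed.

Lemma bin_weight_step_le (R : realFieldType) (m n : nat) : (0 < m)%N ->
  (m * m.+1 <= 4 * ((m.+1 - n) * n.+1))%N ->
  'C(m.+2, n.+1)%:R / (m.+2%:R * 2%:R ^+ m.+2) <= 'C(m, n)%:R / (m%:R * 2%:R ^+ m) :> R.
Proof.
move=> m_gt0 ratio_le.
have pascal2 : ('C(m.+2, n.+1) * ((m.+1 - n) * n.+1) = m.+2 * m.+1 * 'C(m, n))%N.
  have := mul_bin_down m.+2 n.+1; have := mul_bin_diag m.+1 n; rewrite /= subSS.
  move=> diag down; rewrite mulnA [('C(m.+2, n.+1) * _)%N]mulnC -down.
  by rewrite -mulnA [(_ * n.+1)%N]mulnC -diag; ring.
have step_le : ('C(m.+2, n.+1) * m <= 4 * m.+2 * 'C(m, n))%N.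
  have q_gt0 : (0 < (m.+1 - n) * n.+1)%N by nia.
  by rewrite -(leq_pmul2r q_gt0) mulnAC pascal2; nia.
have denom_gt0 j : (0 < j)%N -> (0 : R) < j%:R * 2%:R ^+ j.
  by move=> j_gt0; rewrite mulr_gt0 ?exprn_gt0 ?ltr0n.
rewrite ler_pdivrMr ?denom_gt0 // mulrAC ler_pdivlMr ?denom_gt0 //.
rewrite -!natrX -!natrM ler_nat !expnS.
have -> : ('C(m.+2, n.+1) * (m * 2 ^ m) = 2 ^ m * ('C(m.+2, n.+1) * m))%N by ring.
have -> : ('C(m, n) * (m.+2 * (2 * (2 * 2 ^ m))) = 2 ^ m * (4 * m.+2 * 'C(m, n)))%N by ring.
by rewrite leq_mul2l step_le orbT.
Qed.

Lemma ratio_le_of_sq_le (n k : nat) : (k * k <= 6 * n + 3 * k + 4)%N ->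
  ((2 * n + k) * (2 * n + k).+1 <= 4 * (((2 * n + k).+1 - n) * n.+1))%N.
Proof.
by move=> sq_le; rewrite (_ : (2 * n + k).+1 - n = n + k + 1)%N; [nia | lia].
Qed.

Theorem lemma2p2 (R : realFieldType) (k : nat) (hk : (2 <= k)%N) :
  (forall i : nat, (i < k)%N ->
     delta R k i =
       ('C(k ^ 2 - 1 + 2 * i, (k * (k - 1))./2 + i - 1))%:R / 2%:R ^+ (k ^ 2 - 1 + 2 * i)
     - ('C(k ^ 2 + 2 * i, (k * (k - 1))./2 + i))%:R / 2%:R ^+ (k ^ 2 + 2 * i)) /\
  (forall i : nat, (i.+1 < k)%N -> delta R k i <= delta R k i.+1) /\
  delta R k (k - 1) < 0.
Proof.
set h := (k * (k - 1))./2.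
have h2 : (2 * h = k * (k - 1))%N by rewrite /h !subn1 -bin2 -mul_bin_diag bin1.
have delta_bin i : delta R k i =
    'C(k ^ 2 - 1 + 2 * i, h + i - 1)%:R / 2%:R ^+ (k ^ 2 - 1 + 2 * i)
  - 'C(k ^ 2 + 2 * i, h + i)%:R / 2%:R ^+ (k ^ 2 + 2 * i).
  rewrite /delta (_ : k ^ 2 + 2 * i - 1 = k ^ 2 - 1 + 2 * i)%N; last by lia.
  by rewrite (@probS_bin _ _ (h + i - 1)) ?(@probS_bin _ _ (h + i)) //; lia.
have delta_closed i : delta R k i =
    - (k * 'C(k ^ 2 + 2 * i, h + i))%:R / ((k ^ 2 + 2 * i)%:R * 2%:R ^+ (k ^ 2 + 2 * i)).
  rewrite delta_bin (_ : k ^ 2 - 1 + 2 * i = k ^ 2 + 2 * i - 1)%N; last by lia.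
  apply: bin_weight_pred_sub; lia.
split; first by move=> i _; exact: delta_bin.
split.
  move=> i _; rewrite !delta_closed !mulNr lerN2 !natrM -!mulrA ler_pM2l ?ltr0n; last by lia.
  rewrite (_ : k ^ 2 + 2 * i.+1 = (k ^ 2 + 2 * i).+2)%N; last by lia.
  rewrite (_ : h + i.+1 = (h + i).+1)%N; last by lia.
  rewrite (_ : k ^ 2 + 2 * i = 2 * (h + i) + k)%N; last by lia.
  apply: bin_weight_step_le; first by lia.
  apply: ratio_le_of_sq_le; nia.
rewrite delta_closed mulNr oppr_lt0 divr_gt0 ?mulr_gt0 ?exprn_gt0 ?ltr0n //; last by lia.
by rewrite muln_gt0 bin_gt0; apply/andP; split; lia.
Qed.
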